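(* For any $\varepsilon,\alpha\in(0,1)$ and any $\beta>0$, if $G=(V,E)$ is a finite graph and $\mathcal{P}'$ is a partition of $V$, then there exists an $(\varepsilon,\alpha,\beta)$-good coarsening of $\mathcal{P}'$.
   Context: A partition $\mathcal{P}$ is a coarsening of $\mathcal{P}'$ if every set of $\mathcal{P}$ is a union of sets of $\mathcal{P}'$. Let $\mathcal{P}'$ be $V=V'_1\sqcup\dots\sqcup V'_\ell$ and $\mathcal{P}$, given by $V=V_1\sqcup\dots\sqcup V_k$, a coarsening of it; for $i\in[k]$, $\mathcal{P}_i$ is the partition of $V_i$ into sets of $\mathcal{P}'$. For a partition $\mathcal{Q}$ of a vertex set into sets $U_1,\dots,U_m$ and $c>0$, $H(\mathcal{Q},c)$ is the graph on $[m]$ where $j\ne j'$ are adjacent iff $|E(U_j,U_{j'})|>c$, with $E(A,B)$ the set of edges of $G$ between $A$ and $B$. $\mathcal{P}$ is an $(\varepsilon,\alpha,\beta)$-good coarsening of $\mathcal{P}'$ if there exists $\theta\in\left[\varepsilon\left(\frac{\varepsilon\alpha}{\ell^2}\right)^{2^\ell},\varepsilon\right]$ such that (1) for every $i\in[k]$, $H(\mathcal{P}_i,\theta\beta)$ is connected; (2) for every $i\in[k]$, $|E(V_i,V\setminus V_i)|\le\theta^2\beta\alpha$. *)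

From HB Require Import structures.
From mathcomp Require Import all_boot all_order all_algebra.
From mathcomp Require Import reals.
Set Implicit Arguments. Unset Strict Implicit. Unset Printing Implicit Defensive.
Import Order.TTheory GRing.Theory Num.Theory.
Local Open Scope ring_scope.

(* A finite simple graph: vertex set the finType V, edge relation e
   (assumed symmetric and irreflexive in the theorem). *)

(* |E(A,B)| for disjoint A, B: number of pairs (x,y), x in A, y in B, with
   an edge xy.  For disjoint A and B each edge between them is counted once. *)
Definition nedges (V : finType) (e : rel V) (A B : {set V}) : nat :=
  (#|[set p : V * V | [&& p.1 \in A, p.2 \in B & e p.1 p.2]]|)%N.

Definition Hadj (R : realType) (V : finType) (e : rel V) (Q : {set {set V}}) (c : R)
  : rel {set V} :=
  fun U U' => [&& U \in Q, U' \in Q, U != U' & c < (nedges e U U')%:R].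

Definition H_connected (R : realType) (V : finType) (e : rel V)
  (Q : {set {set V}}) (c : R) : Prop :=
  forall U U', U \in Q -> U' \in Q -> connect (Hadj e Q c) U U'.

Definition coarsening (V : finType) (P P' : {set {set V}}) : Prop :=
  forall X, X \in P -> exists2 S : {set {set V}}, S \subset P' & X = cover S.

Definition subpart (V : finType) (P' : {set {set V}}) (X : {set V}) : {set {set V}} :=
  [set B in P' | B \subset X].

Definition good_coarsening (R : realType) (V : finType) (e : rel V)
  (eps alpha beta : R) (P P' : {set {set V}}) : Prop :=
  partition P [set: V] /\ coarsening P P' /\
  let ell := #|P'| in
  exists theta : R,
    [/\ eps * ((eps * alpha) / (ell ^ 2)%N%:R) ^+ (2 ^ ell)%N <= theta,
        theta <= eps,
        (forall X, X \in P -> H_connected e (subpart P' X) (theta * beta)) &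
        (forall X, X \in P -> (nedges e X (~: X))%:R <= theta ^+ 2 * beta * alpha)].

From HB Require Import structures.
From mathcomp Require Import all_boot all_order all_algebra.
From mathcomp Require Import reals.
From mathcomp Require Import ring zify.
Set Implicit Arguments. Unset Strict Implicit. Unset Printing Implicit Defensive.
Import Order.TTheory GRing.Theory Num.Theory.
Local Open Scope ring_scope.

(* Let H_c be H(P', c).  Its components only merge as c decreases.  Put
   theta_j = eps (eps a)^(2^j - 1) with a = alpha / ell^2, so that
   theta_(j+1) = theta_j^2 a.  The number of components of H_(theta_j beta) is
   nonincreasing in j and at most ell, hence it stalls at some j <= ell, where
   H_(theta_j beta) and H_(theta_(j+1) beta) have the same components.  Take
   for P the unions of these components: each is connected in
   H_(theta_j beta), and blocks of P' in different components span at most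
   theta_(j+1) beta edges, so at most ell^2 theta_(j+1) beta
   = theta_j^2 beta alpha edges leave each part. *)

Lemma leq_card_bigcup (I T : finType) (A : {pred I}) (F : I -> {set T}) :
  (#|\bigcup_(i in A) F i| <= \sum_(i in A) #|F i|)%N.
Proof.
elim/big_rec2: _ => [|i n U _ le_Un]; first by rewrite cards0.
by rewrite (leq_trans (leq_card_setU _ _).1) ?leq_add2l.
Qed.

Lemma closed_connect_sub (T : finType) (r r' : rel T) (a : {pred T}) :
  (forall x y, x \in a -> r x y -> (y \in a) && r' x y) ->
  forall x y, x \in a -> connect r x y -> connect r' x y.
Proof.
move=> cl_a x y ax /connectP[p + ->].
elim: p x ax => [|z p IHp] x ax /=; first by rewrite connect0.
case/andP=> /(cl_a _ _ ax)/andP[az r'xz] /(IHp _ az).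
exact: connect_trans (connect1 r'xz).
Qed.

Lemma nonincreasing_plateau (u : nat -> nat) (l : nat) :
  (forall j, u j.+1 <= u j)%N -> (u 0 <= l)%N ->
  exists2 j, (j <= l)%N & u j.+1 = u j.
Proof.
elim: l u => [|l IHl] u u_dec u0l.
  by exists 0%N => //; apply/eqP; rewrite eqn_leq u_dec (leq_trans u0l).
have [|ne_u10] := eqVneq (u 1%N) (u 0%N); first by exists 0%N.
have [|j jl Ej] := IHl (fun j => u j.+1) (fun j => u_dec j.+1).
  by rewrite -ltnS (leq_trans _ u0l) // ltn_neqAle ne_u10 u_dec.
by exists j.+1.
Qed.

Lemma subpart_cover (T : finType) (P' : {set {set T}}) (D : {set T})
  (K : {set {set T}}) :
  partition P' D -> K \subset P' -> subpart P' (cover K) = K.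
Proof.
move=> partP' sKP'; apply/setP => B; rewrite inE.
apply/andP/idP => [[P'B sBK]|KB]; last by rewrite (subsetP sKP') ?bigcup_sup.
have /set0Pn[x Bx] := partition_neq0 partP' P'B.
have /bigcupP[B' KB' xB'] := subsetP sBK x Bx.
have tiP' := partition_trivIset partP'.
by rewrite -(def_pblock tiP' P'B Bx) (def_pblock tiP' (subsetP sKP' _ KB') xB').
Qed.

Section CoarserPartition.

Variables (T : finType) (D : {set T}) (R S : rel T).
Hypotheses (eqR : equivalence_rel R) (eqS : equivalence_rel S).
Hypothesis sRS : subrel R S.

Let saturate (A : {set T}) := [set y in D | [exists x in A, S x y]].

Let saturate_class x : x \in D ->
  saturate [set y in D | R x y] = [set y in D | S x y].
Proof.
move=> Dx; apply/setP => y; rewrite !inE; apply: andb_id2l => Dy.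
apply/existsP/idP => [[z /andP[/[!inE] /andP[_ /sRS Sxz] Szy]]|Sxy].
  by rewrite ((eqS x z y).2 Sxz).
by exists x; rewrite !inE Dx (eqR x x x).1.
Qed.

Let coarser_imset :
  equivalence_partition S D = saturate @: equivalence_partition R D.
Proof.
rewrite /equivalence_partition -imset_comp.
by apply: eq_in_imset => x Dx; rewrite /= saturate_class.
Qed.

Lemma leq_card_coarser_partition :
  (#|equivalence_partition S D| <= #|equivalence_partition R D|)%N.
Proof. by rewrite coarser_imset leq_imset_card. Qed.

Lemma coarser_partition_card_eq :
  #|equivalence_partition S D| = #|equivalence_partition R D| ->
  equivalence_partition S D = equivalence_partition R D.
Proof.
move=> eq_card; have /imset_injP inj_sat :
  #|saturate @: equivalence_partition R D| == #|equivalence_partition R D|.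
  by rewrite -coarser_imset eq_card.
apply: eq_in_imset => x Dx; apply/setP => y; rewrite !inE.
apply: andb_id2l => Dy; apply/idP/idP => [Sxy|/sRS //].
have : [set z in D | R x z] = [set z in D | R y z].
  apply: inj_sat; rewrite ?imset_f // !saturate_class //.
  by apply/setP => z; rewrite !inE ((eqS x y z).2 Sxy).
by move/setP/(_ y); rewrite !inE Dy (eqR y y y).1.
Qed.

End CoarserPartition.

Section Hcomponents.

Variables (R : realType) (V : finType) (e : rel V).
Hypothesis esym : symmetric e.

Lemma nedgesC (A B : {set V}) : nedges e A B = nedges e B A.
Proof.
have swapK : involutive (fun p : V * V => (p.2, p.1)) by case.
rewrite /nedges -(card_imset _ (inv_inj swapK)); apply: eq_card => -[x y].
apply/imsetP/idP => [[[x' y']]|].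
  by rewrite !inE /= => /and3P[xA yB exy] [-> ->]; rewrite xA yB esym.
rewrite !inE /= => /and3P[xB yA exy].
by exists (y, x); rewrite // inE xB yA esym.
Qed.

Lemma nedges_subset (A A' B B' : {set V}) :
  A \subset A' -> B \subset B' -> (nedges e A B <= nedges e A' B')%N.
Proof.
move=> sAA' sBB'; apply: subset_leq_card; apply/subsetP => -[x y].
by rewrite !inE /= => /and3P[xA yB ->]; rewrite (subsetP sAA') ?(subsetP sBB').
Qed.

Lemma nedges_cover_le (A B : {set {set V}}) :
  (nedges e (cover A) (cover B)
     <= \sum_(U in A) \sum_(U' in B) nedges e U U')%N.
Proof.
pose E (U U' : {set V}) :=
  [set p : V * V | [&& p.1 \in U, p.2 \in U' & e p.1 p.2]].
have sub :
  E (cover A) (cover B) \subset \bigcup_(U in A) \bigcup_(U' in B) E U U'.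
  apply/subsetP => -[x y]; rewrite inE /= => /and3P[/bigcupP[U AU xU]].
  case/bigcupP=> U' BU' yU' exy; apply/bigcupP; exists U => //.
  by apply/bigcupP; exists U'; rewrite // inE xU yU'.
apply: leq_trans (subset_leq_card sub) _.
apply: leq_trans (leq_card_bigcup _ _) _.
by apply: leq_sum => U _; apply: leq_card_bigcup.
Qed.

Lemma Hadj_sym (Q : {set {set V}}) (c : R) : symmetric (Hadj e Q c).
Proof. by move=> U U'; rewrite /Hadj nedgesC eq_sym andbCA. Qed.

Lemma Hadj_antimono (Q : {set {set V}}) (c' c : R) :
  c' <= c -> subrel (Hadj e Q c) (Hadj e Q c').
Proof.
by move=> le_c'c U U'; rewrite /Hadj => /and4P[-> -> -> /(le_lt_trans le_c'c)].
Qed.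

Lemma connect_Hadj_equiv (Q : {set {set V}}) (c : R) :
  equivalence_rel (connect (Hadj e Q c)).
Proof.
apply/equivalence_relP; split; first exact: connect0.
exact/same_connect/sym_connect_sym/Hadj_sym.
Qed.

Definition Hcomponents (Q : {set {set V}}) (c : R) : {set {set {set V}}} :=
  equivalence_partition (connect (Hadj e Q c)) Q.

Lemma Hcomponents_partition (Q : {set {set V}}) (c : R) :
  partition (Hcomponents Q c) Q.
Proof.
by apply: equivalence_partitionP => U U' U'' _ _ _; apply: connect_Hadj_equiv.
Qed.

Lemma leq_card_Hcomponents (Q : {set {set V}}) (c' c : R) : c' <= c ->
  (#|Hcomponents Q c'| <= #|Hcomponents Q c|)%N.
Proof.
move=> le_c'c; apply: leq_card_coarser_partition; try exact: connect_Hadj_equiv.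
by apply: connect_sub => U U' /(Hadj_antimono le_c'c)/connect1.
Qed.

Lemma Hcomponents_card_eq (Q : {set {set V}}) (c' c : R) : c' <= c ->
    #|Hcomponents Q c'| = #|Hcomponents Q c| ->
  Hcomponents Q c' = Hcomponents Q c.
Proof.
move=> le_c'c; apply: coarser_partition_card_eq; try exact: connect_Hadj_equiv.
by apply: connect_sub => U U' /(Hadj_antimono le_c'c)/connect1.
Qed.

Lemma Hcomponents_plateau (Q : {set {set V}}) (c : nat -> R) :
  (forall j, c j.+1 <= c j) ->
  exists2 j, (j <= #|Q|)%N & Hcomponents Q (c j.+1) = Hcomponents Q (c j).
Proof.
move=> c_dec; have [j le_jQ plateau] :=
  @nonincreasing_plateau (fun j => #|Hcomponents Q (c j)|) #|Q|
    (fun j => leq_card_Hcomponents Q (c_dec j)) (leq_imset_card _ _).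
by exists j; last exact: Hcomponents_card_eq (c_dec j) plateau.
Qed.

Lemma Hcomponent_connected (Q K : {set {set V}}) (c : R) :
  K \in Hcomponents Q c -> H_connected e K c.
Proof.
case/imsetP=> B _ defK U U' KU KU'.
have inK X : X \in K = (X \in Q) && connect (Hadj e Q c) B X.
  by rewrite defK inE.
have UU' : connect (Hadj e Q c) U U'.
  move: (KU) (KU'); rewrite !inK => /andP[_ BU] /andP[_ BU'].
  by apply: connect_trans BU'; rewrite (sym_connect_sym (Hadj_sym Q c)).
apply: (@closed_connect_sub _ _ _ (mem K) _ _ _ KU UU').
move=> X Y KX /[dup] HXY /and4P[_ QY neXY lt_c].
have KY : Y \in K.
  move: KX; rewrite !inK QY => /andP[_ BX].
  exact: connect_trans BX (connect1 HXY).
by rewrite KY /Hadj KX KY neXY lt_c.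
Qed.

Lemma Hcomponent_nedges_out (Q K : {set {set V}}) (c : R) U U' :
  K \in Hcomponents Q c -> U \in K -> U' \in Q :\: K -> (nedges e U U')%:R <= c.
Proof.
case/imsetP=> B QB defK KU /setDP[QU' notKU'].
have neqUU' : U != U' by apply: contraNneq notKU' => <-.
have := KU; rewrite defK inE => /andP[QU BU].
rewrite leNgt; apply: contra notKU' => lt_c; rewrite defK inE QU' /=.
by apply: connect_trans BU (connect1 _); rewrite /Hadj QU QU' neqUU'.
Qed.

Lemma nedges_Hcomponent_le (Q K : {set {set V}}) (c : R) :
  cover Q = [set: V] -> 0 <= c -> K \in Hcomponents Q c ->
  (nedges e (cover K) (~: cover K))%:R <= c * (#|Q| ^ 2)%N%:R.
Proof.
move=> coverQ c_ge0 QK.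
have sKQ : K \subset Q := partitionS (Hcomponents_partition Q c) QK.
have sCK : ~: cover K \subset cover (Q :\: K).
  apply/subsetP => x; rewrite inE => xK.
  have /bigcupP[U QU xU] : x \in cover Q by rewrite coverQ inE.
  apply/bigcupP; exists U => //; rewrite inE QU andbT.
  by apply: contra xK => KU; apply/bigcupP; exists U.
apply: le_trans
    (_ : _ <= (\sum_(U in K) \sum_(U' in Q :\: K) nedges e U U')%:R) _.
  by rewrite ler_nat (leq_trans (nedges_subset (subxx _) sCK)) ?nedges_cover_le.
rewrite natr_sum.
apply: le_trans (_ : _ <= \sum_(U in K) \sum_(U' in Q :\: K) c) _.
  apply: ler_sum => U KU; rewrite natr_sum; apply: ler_sum => U' QU'.
  exact: Hcomponent_nedges_out QK KU QU'.
rewrite !sumr_const -mulrnA -[c *+ _]mulr_natr; apply: ler_wpM2l => //.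
by rewrite ler_nat -mulnn leq_mul ?subset_leq_card ?subsetDl.
Qed.

End Hcomponents.

Section Threshold.

Variables (R : realFieldType) (eps a : R).

Definition threshold (n : nat) : R := eps * (eps * a) ^+ (2 ^ n - 1).

Lemma thresholdS n : threshold n.+1 = threshold n ^+ 2 * a.
Proof.
rewrite /threshold; have -> : (2 ^ n.+1 - 1 = ((2 ^ n - 1) + (2 ^ n - 1)).+1)%N.
  by have := expn_gt0 2 n; rewrite expnS; lia.
rewrite exprS exprD; set y := (eps * a) ^+ _; ring.
Qed.

Hypotheses (eps_ge0 : 0 <= eps) (a_ge0 : 0 <= a) (epsa_le1 : eps * a <= 1).

Let epsa_ge0 : 0 <= eps * a. Proof. exact: mulr_ge0. Qed.

Lemma threshold_ge0 n : 0 <= threshold n.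
Proof. by rewrite mulr_ge0 ?exprn_ge0. Qed.

Lemma threshold_le n : threshold n <= eps.
Proof. by rewrite ler_piMr ?exprn_ile1. Qed.

Lemma threshold_antimono m n : (m <= n)%N -> threshold n <= threshold m.
Proof.
move=> le_mn; rewrite ler_wpM2l // ler_wiXn2l // leq_sub2r //.
by rewrite leq_pexp2l.
Qed.

Lemma threshold_lower m n : (m <= n)%N ->
  eps * (eps * a) ^+ (2 ^ n) <= threshold m.
Proof.
move=> le_mn; rewrite ler_wpM2l // ler_wiXn2l //.
by rewrite (leq_trans (leq_subr _ _)) ?leq_pexp2l.
Qed.

End Threshold.

Theorem lemma2p13 (R : realType) (eps alpha beta : R)
  (heps : 0 < eps < 1) (halpha : 0 < alpha < 1) (hbeta : 0 < beta)
  (V : finType) (e : rel V) (esym : symmetric e) (eirr : irreflexive e)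
  (P' : {set {set V}}) (hP' : partition P' [set: V]) :
  exists P : {set {set V}}, good_coarsening e eps alpha beta P P'.
Proof.
case/andP: heps => eps_gt0 eps_lt1; case/andP: halpha => alpha_gt0 alpha_lt1.
set l := #|P'|; set a := alpha / (l ^ 2)%N%:R; set t := threshold eps a.
have eps_ge0 := ltW eps_gt0.
have a_ge0 : 0 <= a by rewrite /a divr_ge0 // ltW.
have a_le1 : a <= 1.
  rewrite /a; have [->|l2_gt0] := posnP (l ^ 2); first by rewrite invr0 mulr0.
  by rewrite ler_pdivrMr ?ltr0n // mul1r (le_trans (ltW alpha_lt1)) ?ler1n.
have epsa_le1 : eps * a <= 1 by rewrite mulr_ile1 // ltW.
have t_antimono j : t j.+1 * beta <= t j * beta.
  by rewrite ler_wpM2r ?threshold_antimono // ltW.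
have [j le_jl comps_eq] := Hcomponents_plateau esym P' t_antimono.
set comps := Hcomponents e P' (t j * beta) in comps_eq *.
have comps_part : partition comps P' := Hcomponents_partition esym P' _.
exists (cover @: comps); split.
  exact: (partition_partition hP' comps_part).1.
split=> [_ /imsetP[K compK ->]|].
  by exists K; rewrite ?(partitionS comps_part).
exists (t j); split=> [||_ /imsetP[K compK ->]|_ /imsetP[K compK ->]].
- by rewrite -mulrA threshold_lower.
- by rewrite threshold_le.
- rewrite (subpart_cover hP') ?(partitionS comps_part) //.
  exact: Hcomponent_connected compK.
- have /set0Pn[U KU] := partition_neq0 comps_part compK.
  have l_gt0 : (0 < l)%N.
    apply/card_gt0P; exists U.
    exact: subsetP (partitionS comps_part compK) U KU.
  suff -> : t j ^+ 2 * beta * alpha = t j.+1 * beta * (l ^ 2)%N%:R.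
    rewrite -comps_eq in compK.
    apply: (nedges_Hcomponent_le esym (cover_partition hP') _ compK).
    by rewrite mulr_ge0 ?threshold_ge0 // ltW.
  by rewrite /t thresholdS /a; field; rewrite pnatr_eq0 -lt0n.
Qed.
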